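(* Let $E=\{a,b,c,d,e\}$ (five distinct events) and let $\delta=(E,\emptyset,\mapsto)$ be the DES with $\mapsto=\{\{x,y\}\mapsto e\mid x,y\in\{a,b,c,d\},\ x\neq y\}$. Then there is no SES $\sigma=(E,\#',\to,\triangleright)$ with the same set of events $E$ such that $\mathrm{Traces}(\delta)=\mathrm{Traces}(\sigma)$. In particular, there exist DESs that cannot be translated into an SES over the same events with the same traces.
   Context: Dual event structure (DES): $\delta=(E,\#,\mapsto)$ with $\#\subseteq E^2$ irreflexive and symmetric, $\mapsto\subseteq 2^E\times E$. For $t=e_1\cdots e_n$, $\overline{t_k}=\{e_1,\ldots,e_k\}$. A DES trace is a finite sequence of pairwise distinct events, pairwise not in conflict, such that for every $i$ and every $X$ with $X\mapsto e_i$ we have $X\cap\overline{t_{i-1}}\neq\emptyset$. SES: $\sigma=(E,\#,\to,\triangleright)$ with $\#\subseteq E^2$ irreflexive and symmetric, $\to\subseteq E^2$ an arbitrary binary relation (initial causality), $\triangleright\subseteq E^3$ with $(c,d,t)\in\triangleright$ implying $c\to t$. $\mathrm{ic}(e)=\{e'\mid e'\to e\}$, $\mathrm{dc}(H,e)=\{e'\mid\exists d\in H.(e',d,e)\in\triangleright\}$. An SES trace is a finite sequence $e_1\cdots e_n$ of pairwise distinct events of $E$, pairwise not in conflict, with $\mathrm{ic}(e_i)\setminus\mathrm{dc}(\overline{t_{i-1}},e_i)\subseteq\overline{t_{i-1}}$ for all $i$. *)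

From Stdlib Require Import List.
Import ListNotations.

(* For t = e_1 ... e_n, the prefix set  \overline{t_k} = {e_1..e_k}  is  firstn k t;
   e_i (1-based) is  nth_error t (i-1),  so  \overline{t_{i-1}}  = firstn (i-1) t. *)

Record DES (E : Type) := mkDES {
  des_conf : E -> E -> Prop;
  des_caus : (E -> Prop) -> E -> Prop }.
Arguments des_conf {E}.
Arguments des_caus {E}.

Definition DES_wf {E : Type} (D : DES E) : Prop :=
  (forall x, ~ des_conf D x x) /\ (forall x y, des_conf D x y -> des_conf D y x).

Definition des_trace {E : Type} (D : DES E) (t : list E) : Prop :=
  NoDup t /\
  (forall x y, In x t -> In y t -> ~ des_conf D x y) /\
  (forall i ei, nth_error t i = Some ei ->
     forall X, des_caus D X ei -> exists x, X x /\ In x (firstn i t)).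

(** Shrinking causality event structures (E, #, ->, |>). *)
Record SES (E : Type) := mkSES {
  ses_conf : E -> E -> Prop;
  ses_ic : E -> E -> Prop;          (* ses_ic e' e  :  e' -> e *)
  ses_dc : E -> E -> E -> Prop }.   (* ses_dc c d t :  (c,d,t) in |> *)
Arguments ses_conf {E}.
Arguments ses_ic {E}.
Arguments ses_dc {E}.

Definition SES_wf {E : Type} (S : SES E) : Prop :=
  (forall x, ~ ses_conf S x x) /\
  (forall x y, ses_conf S x y -> ses_conf S y x) /\
  (forall c d t, ses_dc S c d t -> ses_ic S c t).

Definition ses_trace {E : Type} (S : SES E) (t : list E) : Prop :=
  NoDup t /\
  (forall x y, In x t -> In y t -> ~ ses_conf S x y) /\
  (forall i ei, nth_error t i = Some ei ->
     forall e', ses_ic S e' ei ->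
       ~ (exists d, In d (firstn i t) /\ ses_dc S e' d ei) ->
       In e' (firstn i t)).

Inductive ev5 : Type := Ea | Eb | Ec | Ed | Ee.

Definition abcd (x : ev5) : Prop := x = Ea \/ x = Eb \/ x = Ec \/ x = Ed.

Definition delta6 : DES ev5 :=
  mkDES ev5 (fun _ _ => False)
    (fun X z => z = Ee /\
       exists x y, abcd x /\ abcd y /\ x <> y /\ (forall w, X w <-> w = x \/ w = y)).

(** For a pair [h1, h2] of distinct events of [{a,b,c,d}], the
    sequence [h1 h2] is a trace of [delta6] but [h1 h2 e] is not, because the
    causal set made of the two remaining events [p, q] is not hit.  In an SES with
    the same traces, [e] therefore has an initial cause [y] that neither [h1] nor
    [h2] discharges (by being [y] or by dropping it).  Since [h1 h2 r e] is a trace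
    for [r = p] and [r = q], both [p] and [q] discharge [y].  So the events of
    [{a,b,c,d}] discharging [y] are exactly the complement of the pair: the six
    pairs yield six distinct events, but there are only five. *)

From Stdlib Require Import List Permutation Classical Lia.
Import ListNotations.

Section Traces.

Context {E : Type}.

Definition trace_by (conf : E -> E -> Prop) (enabled : list E -> E -> Prop)
    (t : list E) : Prop :=
  NoDup t /\
  (forall x y, In x t -> In y t -> ~ conf x y) /\
  (forall i ei, nth_error t i = Some ei -> enabled (firstn i t) ei).

Lemma NoDup_app1 (t : list E) (e : E) : NoDup (t ++ [e]) <-> NoDup t /\ ~ In e t.
Proof.
  split.
  - intros H. split; [exact (NoDup_app_remove_r _ _ H)|].
    rewrite <- (app_nil_r t). exact (NoDup_remove_2 t [] e H).
  - intros [Ht He]. apply NoDup_app; [exact Ht | repeat constructor; auto |].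
    intros x Hx [<- | []]. exact (He Hx).
Qed.

Lemma prefixes_app1 (P : list E -> E -> Prop) (t : list E) (e : E) :
  (forall i ei, nth_error (t ++ [e]) i = Some ei -> P (firstn i (t ++ [e])) ei) <->
  (forall i ei, nth_error t i = Some ei -> P (firstn i t) ei) /\ P t e.
Proof.
  assert (Hfirst : forall i, i <= length t -> firstn i (t ++ [e]) = firstn i t).
  { intros i Hi. rewrite firstn_app. replace (i - length t) with 0 by lia.
    apply app_nil_r. }
  split.
  - intros H. split.
    + intros i ei Hi.
      assert (Hlt : i < length t) by (apply nth_error_Some; congruence).
      rewrite <- Hfirst by auto with arith. apply H.
      rewrite nth_error_app1; assumption.
    + rewrite <- (firstn_all t) at 1. rewrite <- Hfirst by auto.
      apply H. rewrite nth_error_app2, PeanoNat.Nat.sub_diag; reflexivity.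
  - intros [H He] i ei Hi.
    destruct (Compare_dec.lt_eq_lt_dec i (length t)) as [[Hlt | ->] | Hgt].
    + rewrite Hfirst by auto with arith. apply H.
      rewrite nth_error_app1 in Hi; assumption.
    + rewrite nth_error_app2, PeanoNat.Nat.sub_diag in Hi by auto.
      injection Hi as <-. rewrite Hfirst, firstn_all by auto. exact He.
    + rewrite nth_error_app2 in Hi by auto with arith.
      destruct (i - length t) eqn:Hd; [exfalso; lia | destruct n; discriminate].
Qed.

Lemma trace_by_app1 (conf : E -> E -> Prop) (enabled : list E -> E -> Prop)
    (t : list E) (e : E) :
  (forall x y, ~ conf x y) ->
  trace_by conf enabled (t ++ [e]) <-> trace_by conf enabled t /\ ~ In e t /\ enabled t e.
Proof.
  intros Hconf. unfold trace_by. rewrite NoDup_app1, prefixes_app1.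
  split.
  - intros [[Hnd He] [_ [Hpre Hen]]]. repeat split; auto.
  - intros [[Hnd [_ Hpre]] [He Hen]]. repeat split; auto.
Qed.

End Traces.

Definition des_enabled {E : Type} (D : DES E) (H : list E) (e : E) : Prop :=
  forall X, des_caus D X e -> exists x, X x /\ In x H.

Definition ses_enabled {E : Type} (S : SES E) (H : list E) (e : E) : Prop :=
  forall y, ses_ic S y e -> ~ (exists d, In d H /\ ses_dc S y d e) -> In y H.

Lemma des_trace_by {E : Type} (D : DES E) (t : list E) :
  des_trace D t <-> trace_by (des_conf D) (des_enabled D) t.
Proof. exact (iff_refl _). Qed.

Lemma ses_trace_by {E : Type} (S : SES E) (t : list E) :
  ses_trace S t <-> trace_by (ses_conf S) (ses_enabled S) t.
Proof. exact (iff_refl _). Qed.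

Definition discharges {E : Type} (S : SES E) (e x y : E) : Prop :=
  x = y \/ ses_dc S y x e.

Lemma ses_enabled_discharges {E : Type} (S : SES E) (H : list E) (e : E) :
  ses_enabled S H e <->
  forall y, ses_ic S y e -> exists x, In x H /\ discharges S e x y.
Proof.
  split.
  - intros Hen y Hy.
    destruct (classic (exists d, In d H /\ ses_dc S y d e)) as [[d [Hd Hdc]] | Hno].
    + exists d. split; [exact Hd | right; exact Hdc].
    + exists y. split; [exact (Hen y Hy Hno) | left; reflexivity].
  - intros Hdis y Hy Hno.
    destruct (Hdis y Hy) as [x [Hx [<- | Hdc]]]; [exact Hx | exfalso; eauto].
Qed.

Lemma not_ses_enabled {E : Type} (S : SES E) (H : list E) (e : E) :
  ~ ses_enabled S H e ->
  exists y, ses_ic S y e /\ forall x, In x H -> ~ discharges S e x y.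
Proof.
  rewrite ses_enabled_discharges. intros Hn.
  apply not_all_ex_not in Hn as [y Hy]. apply imply_to_and in Hy as [Hic Hno].
  exists y. split; [exact Hic|]. intros x Hx Hd. eauto.
Qed.

Lemma abcd_In (x : ev5) : abcd x <-> In x [Ea; Eb; Ec; Ed].
Proof. unfold abcd. destruct x; simpl; intuition discriminate. Qed.

Lemma delta6_enabled (H : list ev5) (e : ev5) :
  des_enabled delta6 H e <->
  (e = Ee -> forall x y, abcd x -> abcd y -> x <> y -> In x H \/ In y H).
Proof.
  split.
  - intros Hen -> x y Hx Hy Hxy.
    destruct (Hen (fun w => w = x \/ w = y)) as [z [[-> | ->] Hz]]; auto.
    split; [reflexivity|]. exists x, y. repeat split; auto.
  - intros Hcov X [-> [x [y [Hx [Hy [Hxy HX]]]]]].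
    destruct (Hcov eq_refl x y Hx Hy Hxy); [exists x | exists y]; rewrite HX; auto.
Qed.

Lemma delta6_trace_without_Ee (t : list ev5) :
  NoDup t -> ~ In Ee t -> des_trace delta6 t.
Proof.
  induction t as [|e t IH] using rev_ind.
  - intros _ _. split; [constructor | split].
    + intros x y [].
    + intros [|i] ei Hi; discriminate.
  - rewrite NoDup_app1, in_app_iff. intros [Hnd He] HEe.
    rewrite des_trace_by, trace_by_app1 by auto. split; [|split].
    + apply IH; auto.
    + exact He.
    + apply delta6_enabled. intros ->. exfalso. apply HEe. right. left. reflexivity.
Qed.

Lemma delta6_trace_Ee_last (t : list ev5) :
  NoDup t -> ~ In Ee t ->
  des_trace delta6 (t ++ [Ee]) <->
  forall x y, abcd x -> abcd y -> x <> y -> In x t \/ In y t.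
Proof.
  intros Hnd HEe. rewrite des_trace_by, trace_by_app1, delta6_enabled by auto.
  split.
  - intros [_ [_ Hcov]]. exact (Hcov eq_refl).
  - intros Hcov. split; [apply delta6_trace_without_Ee; auto | auto].
Qed.

Section Split.

Variables h1 h2 p q : ev5.
Hypothesis Hsplit : Permutation [h1; h2; p; q] [Ea; Eb; Ec; Ed].

Lemma split_abcd (x : ev5) : abcd x <-> In x [h1; h2; p; q].
Proof.
  rewrite abcd_In. split; apply Permutation_in; [symmetry|]; exact Hsplit.
Qed.

Lemma split_distinct : NoDup [h1; h2; p; q; Ee].
Proof.
  change [h1; h2; p; q; Ee] with ([h1; h2; p; q] ++ [Ee]). apply NoDup_app1. split.
  - apply (Permutation_NoDup (Permutation_sym Hsplit)).
    repeat constructor; simpl; intuition discriminate.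
  - rewrite <- split_abcd. unfold abcd. intuition discriminate.
Qed.

Ltac distinct :=
  pose proof split_distinct as Hd; rewrite !NoDup_cons_iff in *; simpl in *;
  intuition congruence.

Lemma split_pair_not_Ee : ~ In Ee [h1; h2].
Proof. distinct. Qed.

Lemma split_pair_trace : des_trace delta6 [h1; h2].
Proof. apply delta6_trace_without_Ee; [distinct | exact split_pair_not_Ee]. Qed.

Lemma split_pair_Ee_not_trace : ~ des_trace delta6 [h1; h2; Ee].
Proof.
  change [h1; h2; Ee] with ([h1; h2] ++ [Ee]).
  rewrite delta6_trace_Ee_last by distinct. intros Hcov.
  destruct (Hcov p q) as [Hp | Hq]; rewrite ?split_abcd; simpl; try distinct.
Qed.

Lemma split_triple_Ee_trace : des_trace delta6 [h1; h2; p; Ee].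
Proof.
  change [h1; h2; p; Ee] with ([h1; h2; p] ++ [Ee]).
  rewrite delta6_trace_Ee_last by distinct. intros x y Hx Hy Hxy.
  rewrite split_abcd in Hx, Hy. simpl in *.
  destruct Hx as [<- | [<- | [<- | [<- | []]]]]; auto.
  destruct Hy as [<- | [<- | [<- | [<- | []]]]]; auto. congruence.
Qed.

End Split.

Section SameTraces.

Variable S : SES ev5.
Hypothesis Htraces : forall t, des_trace delta6 t <-> ses_trace S t.

Lemma same_traces_conflict_free (x y : ev5) : ~ ses_conf S x y.
Proof.
  assert (Hfull : ses_trace S ([Ea; Eb; Ec; Ed] ++ [Ee])).
  { apply Htraces, delta6_trace_Ee_last.
    - repeat constructor; simpl; intuition discriminate.
    - simpl; intuition discriminate.
    - intros x' y' Hx _ _. left. apply abcd_In, Hx. }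
  destruct Hfull as [_ [Hconf _]]. apply Hconf; destruct x, y; simpl; tauto.
Qed.

Lemma same_traces_app1 (t : list ev5) (e : ev5) :
  ses_trace S (t ++ [e]) <-> ses_trace S t /\ ~ In e t /\ ses_enabled S t e.
Proof.
  rewrite !ses_trace_by. apply trace_by_app1, same_traces_conflict_free.
Qed.

Lemma split_blocked_cause (h1 h2 p q : ev5) :
  Permutation [h1; h2; p; q] [Ea; Eb; Ec; Ed] ->
  exists y, discharges S Ee p y /\ discharges S Ee q y /\
            ~ discharges S Ee h1 y /\ ~ discharges S Ee h2 y.
Proof.
  intros Hsplit.
  assert (Hblocked : ~ ses_enabled S [h1; h2] Ee).
  { intros Hen. apply (split_pair_Ee_not_trace h1 h2 p q Hsplit), Htraces.
    change [h1; h2; Ee] with ([h1; h2] ++ [Ee]).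
    apply same_traces_app1. split; [|split].
    - apply Htraces, (split_pair_trace h1 h2 p q Hsplit).
    - exact (split_pair_not_Ee h1 h2 p q Hsplit).
    - exact Hen. }
  destruct (not_ses_enabled S [h1; h2] Ee Hblocked) as [y [Hic Hy]].
  assert (Hthird : forall r s, Permutation [h1; h2; r; s] [Ea; Eb; Ec; Ed] ->
                               discharges S Ee r y).
  { intros r s Hrs.
    pose proof (proj1 (Htraces _) (split_triple_Ee_trace h1 h2 r s Hrs)) as Ht.
    change [h1; h2; r; Ee] with ([h1; h2; r] ++ [Ee]) in Ht.
    apply same_traces_app1 in Ht as [_ [_ Hen]].
    rewrite ses_enabled_discharges in Hen.
    destruct (Hen y Hic) as [x [Hin Hx]].
    destruct Hin as [<- | [<- | [<- | []]]]; [| |exact Hx];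
      exfalso; refine (Hy _ _ Hx); simpl; auto. }
  exists y. repeat split.
  - exact (Hthird p q Hsplit).
  - apply (Hthird q p), (Permutation_trans (l' := [h1; h2; p; q])); [|exact Hsplit].
    do 2 apply perm_skip. apply perm_swap.
  - apply Hy; simpl; auto.
  - apply Hy; simpl; auto.
Qed.

End SameTraces.

Lemma ev5_eq_dec (x y : ev5) : {x = y} + {x <> y}.
Proof. decide equality. Defined.

Lemma ev5_NoDup_length (l : list ev5) : NoDup l -> length l <= 5.
Proof.
  intros Hl. apply (NoDup_incl_length (l' := [Ea; Eb; Ec; Ed; Ee]) Hl).
  intros [] _; simpl; tauto.
Qed.

Ltac abcd_perm :=
  apply (Permutation_count_occ ev5_eq_dec); intros []; reflexivity.

Theorem lemma6 :
  DES_wf delta6 /\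
  ~ exists S : SES ev5, SES_wf S /\ (forall t, des_trace delta6 t <-> ses_trace S t).
Proof.
  split; [split; simpl; auto|].
  intros [S [_ Htraces]].
  destruct (split_blocked_cause S Htraces Ec Ed Ea Eb ltac:(abcd_perm)) as [y1 H1].
  destruct (split_blocked_cause S Htraces Eb Ed Ea Ec ltac:(abcd_perm)) as [y2 H2].
  destruct (split_blocked_cause S Htraces Eb Ec Ea Ed ltac:(abcd_perm)) as [y3 H3].
  destruct (split_blocked_cause S Htraces Ea Ed Eb Ec ltac:(abcd_perm)) as [y4 H4].
  destruct (split_blocked_cause S Htraces Ea Ec Eb Ed ltac:(abcd_perm)) as [y5 H5].
  destruct (split_blocked_cause S Htraces Ea Eb Ec Ed ltac:(abcd_perm)) as [y6 H6].
  assert (Hdistinct : NoDup [y1; y2; y3; y4; y5; y6]).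
  { repeat constructor; simpl; intuition (subst; contradiction). }
  apply ev5_NoDup_length in Hdistinct. simpl in Hdistinct. lia.
Qed.
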